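(* Fix a program in the first-order functional language described in the context. Then for every expression $\pi{:}e$ of the program and every slicing criterion $\sigma$, $$\mathcal S(L(M_\pi^\sigma))\neq\emptyset \iff \mathrm{inSlice}(e,\sigma),$$ where $\mathrm{inSlice}(e,\sigma)$ holds iff $L(A^{\mathrm{comp}}_\pi)\cap\sigma\neq\emptyset$. Here $M_\pi^\sigma$ is the Mohri–Nederhof approximation of the demand grammar $G_\pi^\sigma$ and $A^{\mathrm{comp}}_\pi$ is the completing automaton of $\pi$.
   Context: Programs. A program consists of first-order function definitions $(\mathtt{define}\ (f\ z_1\ \dots\ z_n)\ e_f)$ and a main expression $e_{\mathrm{main}}$, which is treated as the body of a parameterless function $\mathrm{main}$. Programs are in administrative normal form and all variable names are distinct. The grammar is $e ::= (\mathtt{if}\ x\ e_1\ e_2) \mid (\mathtt{let}\ x \leftarrow s\ \mathtt{in}\ e) \mid (\mathtt{return}\ x)$, $s ::= k \mid \mathtt{nil} \mid (\mathtt{cons}\ x_1\ x_2) \mid (\mathtt{car}\ x) \mid (\mathtt{cdr}\ x) \mid (\mathtt{null?}\ x) \mid (+\ x_1\ x_2) \mid (f\ x_1 \dots x_n)$. Every expression, every application and every variable occurrence carries a distinct label $\pi$. Demands. Let $\Sigma=\{0,1,\bar0,\bar1,2\}$. A demand is a set of strings over $\Sigma$. For sets we write $\sigma_1\sigma_2=\{\alpha\beta\}$ and $a\sigma=\{a\alpha\mid\alpha\in\sigma\}$. A slicing criterion is a prefix-closed set of strings over $\{0,1\}$ (given by a regular grammar). Demand analysis. Maps from program points to demands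 are combined by pointwise union. For applications, $\mathcal A(s,\sigma)$ is: - for a constant or $\mathtt{nil}$: $\{\pi\mapsto\sigma\}$; - for $(\mathtt{null?}\ \pi_1{:}x)$: $\{\pi_1\mapsto2\sigma,\pi\mapsto\sigma\}$; - for $(+\ \pi_1{:}x\ \pi_2{:}y)$: $\{\pi_1\mapsto2\sigma,\pi_2\mapsto2\sigma,\pi\mapsto\sigma\}$; - for $(\mathtt{car}\ \pi_1{:}x)$: $\{\pi_1\mapsto2\sigma\cup0\sigma,\pi\mapsto\sigma\}$; - for $(\mathtt{cdr}\ \pi_1{:}x)$: $\{\pi_1\mapsto2\sigma\cup1\sigma,\pi\mapsto\sigma\}$; - for $(\mathtt{cons}\ \pi_1{:}x\ \pi_2{:}y)$: $\{\pi_1\mapsto\bar0\sigma,\pi_2\mapsto\bar1\sigma,\pi\mapsto\sigma\}$; - for $(f\ \pi_1{:}y_1\dots\pi_n{:}y_n)$: $\{\pi_i\mapsto L_f^i\sigma,\pi\mapsto\sigma\}$. For expressions, $\mathcal D$ is: - $\mathcal D(\pi{:}(\mathtt{return}\ \pi_1{:}x),\sigma)=\{\pi_1\mapsto\sigma,\pi\mapsto\sigma\}$; - $\mathcal D(\pi{:}(\mathtt{if}\ \pi_1{:}x\ e_1\ e_2),\sigma)=\mathcal D(e_1,\sigma)\cup\mathcal D(e_2,\sigma)\cup\{\pi_1\mapsto2\sigma,\pi\mapsto\sigma\}$; - $\mathcal D(\pi{:}(\mathtt{let}\ x\leftarrow s\ \mathtt{in}\ e),\sigma)=\mathcal A(s,\bigcup_{\pi'}DE(\pi'))\cup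 DE\cup\{\pi\mapsto\sigma\}$, where $DE=\mathcal D(e,\sigma)$ and $\pi'$ ranges over the occurrences of $x$ in $e$. Summaries and concrete demands. $L_f^i\subseteq\Sigma^*$ satisfies $L_f^i\sigma=\bigcup_{\pi'}\mathcal D(e_f,\sigma)(\pi')$ over occurrences $\pi'$ of the $i$-th parameter in $e_f$, for symbolic $\sigma$. The concrete demands are $\sigma_{\mathrm{main}}=$ the slicing criterion, and $\sigma_f=$ the union of the demands on all call sites of $f$. The demand at $\pi$ in the body of $f$ is $D_\pi=\mathcal D(e_f,\sigma_f)(\pi)$. These equations form a context-free grammar over $\Sigma$ (least solution); $G_\pi^\sigma$ is this grammar with start symbol $D_\pi$. Mohri–Nederhof approximation. Consider each strongly connected component $N'$ of mutually recursive nonterminals whose productions are neither all right-linear nor all left-linear with respect to $N'$. For such a component, add a fresh $A'$ for each $A\in N'$. Replace each production $A\to\alpha_0B_1\alpha_1\cdots B_m\alpha_m$ ($A,B_j\in N'$, the $\alpha_j$ free of $N'$-nonterminals, $m\ge0$) by $A\to\alpha_0B_1,\ B_1'\to\alpha_1B_2,\dots,B_m'\to\alpha_mA'$ (for $m=0$: $A\to\alpha_0A'$), and add $A'\to\epsilon$ for each $A\in N'$. $M_\pi^\sigma$ is the resulting regular grammar/automaton from $G_\pi^\sigma$, with language $L(M_\pi^\sigma)$. Simplification $\mathcal S$ (string-wise from the right, extended to sets by union): - $\mathcal S(\epsilon)=\{\epsilon\}$; - $\mathcal S(0w)=0\mathcal S(w)$ and $\mathcal S(1w)=1\mathcal S(w)$;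 - $\mathcal S(\bar0w)=\{\alpha\mid0\alpha\in\mathcal S(w)\}$ and $\mathcal S(\bar1w)=\{\alpha\mid1\alpha\in\mathcal S(w)\}$; - $\mathcal S(2w)=\emptyset$ if $\mathcal S(w)=\emptyset$, and $\{\epsilon\}$ otherwise. Canonicalization $\mathcal C$ (string-wise from the right, extended by union): - $\mathcal C(\epsilon)=\{\epsilon\}$; - $\mathcal C(0w)=0\mathcal C(w)$, $\mathcal C(1w)=1\mathcal C(w)$, $\mathcal C(2w)=2\mathcal C(w)$; - $\mathcal C(\bar0w)=\{\bar0\mid\mathcal C(w)=\{\epsilon\}\}\cup\{\alpha\mid0\alpha\in\mathcal C(w)\}\cup\{\bar0\bar1\alpha\mid\bar1\alpha\in\mathcal C(w)\}\cup\{\bar0\bar0\alpha\mid\bar0\alpha\in\mathcal C(w)\}$; - $\mathcal C(\bar1w)=\{\bar1\mid\mathcal C(w)=\{\epsilon\}\}\cup\{\alpha\mid1\alpha\in\mathcal C(w)\}\cup\{\bar1\bar1\alpha\mid\bar1\alpha\in\mathcal C(w)\}\cup\{\bar1\bar0\alpha\mid\bar0\alpha\in\mathcal C(w)\}$. $A_\pi$ is an automaton accepting $\mathcal C(L(M_\pi^{\{\epsilon\}}))$. For $p\in\{\bar0,\bar1\}^*$, $\overline{p}$ is the reverse of $p$ with $\bar0\mapsto0$ and $\bar1\mapsto1$. The completing automaton $A^{\mathrm{comp}}_\pi$ is constructed from $A_\pi$ as follows: - take as final states those reachable from the start state by transitions labelled $0,1,2$ only; - reverse every $\bar0$-transition into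 a $0$-transition and every $\bar1$-transition into a $1$-transition, dropping all other transitions; - add a new start state with $\epsilon$-transitions to the old final states. Its language is $L(A^{\mathrm{comp}}_\pi)=\{\overline{p}\mid p\in\{\bar0,\bar1\}^*,\ \exists u\in\{0,1,2\}^*:\ up\in L(A_\pi)\}$. *)

From mathcomp Require Import all_boot.
From Stdlib Require List.
From Stdlib Require Import Relation_Operators.

Set Implicit Arguments.
Unset Strict Implicit.
Unset Printing Implicit Defensive.

(** * Generic context-free grammars (least-solution semantics)         *)

Section Grammar.
Variables (T N : Type).
Definition grammar := N -> seq (T + N) -> Prop.

Inductive gen (P : grammar) : seq (T + N) -> seq T -> Prop :=
| gen_nil : gen P [::] [::]
| gen_t (t : T) r w : gen P r w -> gen P (inl t :: r) (t :: w)
| gen_n (A : N) r rhs w1 w2 :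
    P A rhs -> gen P rhs w1 -> gen P r w2 -> gen P (inr A :: r) (w1 ++ w2).

Definition lang (P : grammar) (A : N) : seq T -> Prop := gen P [:: inr A].

Definition dep (P : grammar) (A B : N) : Prop :=
  exists rhs, P A rhs /\ List.In (inr B) rhs.

(** mutual recursion = same strongly connected component *)
Definition sameSCC (P : grammar) (A B : N) : Prop :=
  clos_refl_trans N (dep P) A B /\ clos_refl_trans N (dep P) B A.

Definition Nfree (Q : N -> Prop) (alpha : seq (T + N)) : Prop :=
  forall B, List.In (inr B) alpha -> ~ Q B.

Definition rlin (Q : N -> Prop) (rhs : seq (T + N)) : Prop :=
  Nfree Q rhs \/
  exists alpha B, rhs = alpha ++ [:: inr B] /\ Q B /\ Nfree Q alpha.

Definition llin (Q : N -> Prop) (rhs : seq (T + N)) : Prop :=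
  Nfree Q rhs \/
  exists alpha B, rhs = inr B :: alpha /\ Q B /\ Nfree Q alpha.

Definition transformed (P : grammar) (A : N) : Prop :=
  ~ (forall C rhs, sameSCC P A C -> P C rhs -> rlin (sameSCC P A) rhs) /\
  ~ (forall C rhs, sameSCC P A C -> P C rhs -> llin (sameSCC P A) rhs).

(** Mohri--Nederhof: nonterminals [N * bool], [(A,true)] is [A']. *)
Definition liftsym (s : T + N) : T + (N * bool) :=
  match s with inl t => inl t | inr B => inr (B, false) end.

(** [mn_piece Q A H rhs X beta]: processing the remainder [rhs] of a
    production of [A] whose current left-hand side is [H] produces the new
    production [X -> beta]. *)
Inductive mn_piece (Q : N -> Prop) (A : N) :
  N * bool -> seq (T + N) -> N * bool -> seq (T + (N * bool)) -> Prop :=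
| mnp_end H alpha :
    Nfree Q alpha ->
    mn_piece Q A H alpha H (map liftsym alpha ++ [:: inr (A, true)])
| mnp_here H alpha B rest :
    Nfree Q alpha -> Q B ->
    mn_piece Q A H (alpha ++ inr B :: rest) H
             (map liftsym alpha ++ [:: inr (B, false)])
| mnp_later H alpha B rest X beta :
    Nfree Q alpha -> Q B ->
    mn_piece Q A (B, true) rest X beta ->
    mn_piece Q A H (alpha ++ inr B :: rest) X beta.

Definition MN (P : grammar) : N * bool -> seq (T + (N * bool)) -> Prop :=
  fun X beta =>
    (~ transformed P X.1 /\ X.2 = false /\
       exists rhs, P X.1 rhs /\ beta = map liftsym rhs)
    \/ (exists A rhs, transformed P A /\ P A rhs /\
          mn_piece (sameSCC P A) A (A, false) rhs X beta)
    \/ (transformed P X.1 /\ X.2 = true /\ beta = [::]).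

End Grammar.

(** * Demand alphabet, simplification, canonicalization                *)

Inductive dsym := S0 | S1 | S0b | S1b | S2.

Fixpoint Ssimp (w : seq dsym) : seq dsym -> Prop :=
  match w with
  | [::] => fun a => a = [::]
  | S0 :: w' => fun a => exists b, a = S0 :: b /\ Ssimp w' b
  | S1 :: w' => fun a => exists b, a = S1 :: b /\ Ssimp w' b
  | S0b :: w' => fun a => Ssimp w' (S0 :: a)
  | S1b :: w' => fun a => Ssimp w' (S1 :: a)
  | S2 :: w' => fun a => a = [::] /\ exists b, Ssimp w' b
  end.

Fixpoint Ccan (w : seq dsym) : seq dsym -> Prop :=
  match w with
  | [::] => fun a => a = [::]
  | S0 :: w' => fun a => exists b, a = S0 :: b /\ Ccan w' b
  | S1 :: w' => fun a => exists b, a = S1 :: b /\ Ccan w' b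
  | S2 :: w' => fun a => exists b, a = S2 :: b /\ Ccan w' b
  | S0b :: w' => fun a =>
      (a = [:: S0b] /\ (forall b, Ccan w' b <-> b = [::]))
      \/ Ccan w' (S0 :: a)
      \/ (exists b, a = S0b :: S1b :: b /\ Ccan w' (S1b :: b))
      \/ (exists b, a = S0b :: S0b :: b /\ Ccan w' (S0b :: b))
  | S1b :: w' => fun a =>
      (a = [:: S1b] /\ (forall b, Ccan w' b <-> b = [::]))
      \/ Ccan w' (S1 :: a)
      \/ (exists b, a = S1b :: S1b :: b /\ Ccan w' (S1b :: b))
      \/ (exists b, a = S1b :: S0b :: b /\ Ccan w' (S0b :: b))
  end.

Definition liftset (F : seq dsym -> seq dsym -> Prop) (L : seq dsym -> Prop)
  : seq dsym -> Prop := fun a => exists w, L w /\ F w a.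

Definition isbar (s : dsym) : bool :=
  match s with S0b | S1b => true | _ => false end.
Definition isplain (s : dsym) : bool :=
  match s with S0 | S1 | S2 => true | _ => false end.
Definition is01 (s : dsym) : bool :=
  match s with S0 | S1 => true | _ => false end.
Definition unbar (s : dsym) : dsym :=
  match s with S0b => S0 | S1b => S1 | s => s end.
Definition revbar (p : seq dsym) : seq dsym := rev (map unbar p).

(** language of the completing automaton built from an automaton with
    language [L] *)
Definition comp_lang (L : seq dsym -> Prop) : seq dsym -> Prop :=
  fun v => exists p u, all isbar p /\ all isplain u /\ L (u ++ p) /\
                       v = revbar p.

(** * Programs                                                         *)

Definition label := nat.
Definition var := nat.
Definition fname := nat.

Record occ := Occ { olab : label; ovar : var }.

(** applications s (their own label is stored in the enclosing let) *)
Inductive app :=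
| AConst (k : nat)
| ANil
| ACons (x1 x2 : occ)
| ACar (x : occ)
| ACdr (x : occ)
| ANull (x : occ)
| AAdd (x1 x2 : occ)
| ACall (f : fname) (ys : seq occ).

(** expressions; [ELet pi x pis s e] is  pi:(let x <- pis:s in e) *)
Inductive expr :=
| EIf (pi : label) (x : occ) (e1 e2 : expr)
| ELet (pi : label) (x : var) (pis : label) (s : app) (e : expr)
| EReturn (pi : label) (x : occ).

Record fdef := FDef { fd_name : fname; fd_params : seq var; fd_body : expr }.
Record program := Prog { p_defs : seq fdef; p_main : expr }.

Definition app_occs (s : app) : seq occ :=
  match s with
  | AConst _ | ANil => [::]
  | ACons a b | AAdd a b => [:: a; b]
  | ACar a | ACdr a | ANull a => [:: a]
  | ACall _ ys => ys
  end.

Fixpoint labels (e : expr) : seq label :=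
  match e with
  | EIf pi o e1 e2 => pi :: olab o :: labels e1 ++ labels e2
  | ELet pi _ pis s e' => pi :: pis :: map olab (app_occs s) ++ labels e'
  | EReturn pi o => [:: pi; olab o]
  end.

Fixpoint elabels (e : expr) : seq label :=
  match e with
  | EIf pi _ e1 e2 => pi :: elabels e1 ++ elabels e2
  | ELet pi _ _ _ e' => pi :: elabels e'
  | EReturn pi _ => [:: pi]
  end.

Fixpoint binders (e : expr) : seq var :=
  match e with
  | EIf _ _ e1 e2 => binders e1 ++ binders e2
  | ELet _ x _ _ e' => x :: binders e'
  | EReturn _ _ => [::]
  end.

Fixpoint callsites (f : fname) (e : expr) : seq label :=
  match e with
  | EIf _ _ e1 e2 => callsites f e1 ++ callsites f e2
  | ELet _ _ pis s e' =>
      (if s is ACall g _ then (if g == f then [:: pis] else [::]) else [::])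
      ++ callsites f e'
  | EReturn _ _ => [::]
  end.

Definition occ_of (x : var) (o : occ) : seq label :=
  if ovar o == x then [:: olab o] else [::].

Fixpoint occs (x : var) (e : expr) : seq label :=
  match e with
  | EIf _ o e1 e2 => occ_of x o ++ occs x e1 ++ occs x e2
  | ELet _ _ _ s e' => flatten (map (occ_of x) (app_occs s)) ++ occs x e'
  | EReturn _ o => occ_of x o
  end.

Fixpoint scoped (env : seq var) (e : expr) : bool :=
  match e with
  | EIf _ o e1 e2 => (ovar o \in env) && scoped env e1 && scoped env e2
  | ELet _ x _ s e' =>
      all (fun o => ovar o \in env) (app_occs s) && scoped (x :: env) e'
  | EReturn _ o => ovar o \in env
  end.

Fixpoint calls_ok (defs : seq fdef) (e : expr) : bool :=
  match e with
  | EIf _ _ e1 e2 => calls_ok defs e1 && calls_ok defs e2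
  | ELet _ _ _ s e' =>
      (if s is ACall f ys then
         has (fun d => (fd_name d == f) && (size (fd_params d) == size ys)) defs
       else true) && calls_ok defs e'
  | EReturn _ _ => true
  end.

Definition bodies (p : program) : seq expr :=
  p_main p :: map fd_body (p_defs p).

Definition wf_program (p : program) : bool :=
  [&& uniq (flatten (map labels (bodies p))),
      uniq (flatten (map fd_params (p_defs p)) ++
            flatten (map binders (bodies p))),
      uniq (map fd_name (p_defs p)),
      all (calls_ok (p_defs p)) (bodies p),
      scoped [::] (p_main p) &
      all (fun d => scoped (fd_params d) (fd_body d)) (p_defs p)].

Definition expr_labels (p : program) : seq label :=
  flatten (map elabels (bodies p)).

(** * The demand grammar G^sigma                                       *)

(** nonterminals:
    - [NRel pi]  : X_pi with D(e_f, sigma)(pi) = X_pi sigma (relative demand)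
    - [ND pi]    : the demand D_pi = D(e_f, sigma_f)(pi)
    - [NL f i]   : the summary L_f^i
    - [NSig f]   : sigma_f ([None] = main)
    - [NCrit c]  : nonterminals of the slicing-criterion grammar *)
Inductive dnt (CN : Type) :=
| NRel (pi : label)
| ND (pi : label)
| NL (f : fname) (i : nat)
| NSig (f : option fname)
| NCrit (c : CN).
Arguments NRel {CN}. Arguments ND {CN}. Arguments NL {CN}. Arguments NSig {CN}.

Section DemandGrammar.
Variable CN : Type.
Local Notation sym := (dsym + dnt CN)%type.
Local Notation prod := (dnt CN * seq sym)%type.

(** A(s, .) with the demand on the application label [pis] *)
Definition app_prods (pis : label) (s : app) : seq prod :=
  let d : sym := inr (NRel pis) in
  match s with
  | AConst _ | ANil => [::]
  | ACons a b => [:: (NRel (olab a), [:: inl S0b; d]);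
                     (NRel (olab b), [:: inl S1b; d])]
  | ACar a => [:: (NRel (olab a), [:: inl S2; d]);
                  (NRel (olab a), [:: inl S0; d])]
  | ACdr a => [:: (NRel (olab a), [:: inl S2; d]);
                  (NRel (olab a), [:: inl S1; d])]
  | ANull a => [:: (NRel (olab a), [:: inl S2; d])]
  | AAdd a b => [:: (NRel (olab a), [:: inl S2; d]);
                    (NRel (olab b), [:: inl S2; d])]
  | ACall f ys =>
      [seq (NRel (olab iy.2), [:: inr (NL f iy.1); d])
      | iy <- zip (iota 0 (size ys)) ys]
  end.

(** D(e, sigma) relative to the symbolic sigma *)
Fixpoint rel_prods (e : expr) : seq prod :=
  match e with
  | EReturn pi o => [:: (NRel pi, [::]); (NRel (olab o), [::])]
  | EIf pi o e1 e2 =>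
      (NRel pi, [::]) :: (NRel (olab o), [:: inl S2])
        :: rel_prods e1 ++ rel_prods e2
  | ELet pi x pis s e' =>
      (NRel pi, [::])
        :: [seq (NRel pis, [:: (inr (NRel q) : sym)]) | q <- occs x e']
        ++ app_prods pis s ++ rel_prods e'
  end.

(** productions for function [d]: body, summaries L_f^i, D_pi = X_pi sigma_f,
    sigma_f = union of demands on call sites *)
Definition fun_prods (p : program) (d : fdef) : seq prod :=
  rel_prods (fd_body d)
  ++ flatten [seq [seq (NL (fd_name d) iz.1, [:: (inr (NRel q) : sym)])
                  | q <- occs iz.2 (fd_body d)]
             | iz <- zip (iota 0 (size (fd_params d))) (fd_params d)]
  ++ [seq (ND l, [:: inr (NRel l); inr (NSig (Some (fd_name d)))])
     | l <- labels (fd_body d)]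
  ++ [seq (NSig (Some (fd_name d)), [:: (inr (ND c) : sym)])
     | c <- flatten (map (callsites (fd_name d)) (bodies p))].

Definition lift_crit (s : dsym + CN) : sym :=
  match s with inl t => inl t | inr c => inr (NCrit c) end.

(** the demand grammar with slicing criterion given by the regular grammar
    [cps] with start symbol [cs] (sigma_main = criterion) *)
Definition demand_grammar (p : program) (cps : seq (CN * seq (dsym + CN)))
  (cs : CN) : grammar dsym (dnt CN) :=
  fun X r =>
    List.In (X, r)
      (rel_prods (p_main p)
       ++ [seq (ND l, [:: inr (NRel l); inr (NSig None)]) | l <- labels (p_main p)]
       ++ [:: (NSig None, [:: inr (NCrit cs)])]
       ++ flatten (map (fun_prods p) (p_defs p)))
    \/ exists c r', X = NCrit c /\ List.In (c, r') cps /\ r = map lift_crit r'.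

Definition M_lang (p : program) (cps : seq (CN * seq (dsym + CN))) (cs : CN)
  (pi : label) : seq dsym -> Prop :=
  lang (MN (demand_grammar p cps cs)) (ND pi, false).

End DemandGrammar.

Definition crit_grammar (CN : Type) (cps : seq (CN * seq (dsym + CN)))
  : grammar dsym CN := fun A r => List.In (A, r) cps.

Definition crit_lang (CN : Type) (cps : seq (CN * seq (dsym + CN))) (cs : CN)
  : seq dsym -> Prop := lang (crit_grammar cps) cs.

Definition slicing_criterion (CN : Type) (cps : seq (CN * seq (dsym + CN)))
  (cs : CN) : Prop :=
  (forall A r, List.In (A, r) cps ->
     exists w ob, r = map inl w ++ ob /\ all is01 w /\
                  (ob = [::] \/ exists B, ob = [:: inr B]))
  /\ (forall w a, crit_lang cps cs w -> (exists c, w = a ++ c) ->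
                  crit_lang cps cs a).

Definition eps_cps : seq (unit * seq (dsym + unit)) := [:: (tt, [::])].

(** L(A^comp_pi), with A_pi accepting C(L(M_pi^{eps})) *)
Definition Acomp_lang (p : program) (pi : label) : seq dsym -> Prop :=
  comp_lang (liftset Ccan (M_lang p eps_cps tt pi)).

Definition inSlice (p : program) (pi : label) (sigma : seq dsym -> Prop)
  : Prop := exists v, Acomp_lang p pi v /\ sigma v.

(* The nonterminals through which demand reaches the slicing criterion
   (D_pi, sigma_f and those of the criterion grammar) form right-linear,
   hence untransformed, components, while the rest of the demand grammar does
   not mention the criterion at all. So the Mohri-Nederhof approximation
   factors as L(M_pi^sigma) = L(M_pi^eps) . sigma.
   On strings, S(w s) = S(C(w) s), and a canonical string is u p with u over
   {0,1,2} and p over {0bar,1bar}; for s over {0,1}, S(u p s) is nonempty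
   exactly when s extends overline(p). Hence S(L(M_pi^sigma)) is nonempty iff
   some overline(p) has an extension in sigma, which by prefix closure means
   that L(A^comp_pi) meets sigma. *)

From mathcomp Require Import all_boot.
From Stdlib Require Import Classical.
From Stdlib Require List.
From Stdlib Require Import Relation_Operators.

Set Implicit Arguments.
Unset Strict Implicit.
Unset Printing Implicit Defensive.

(* Each step of C maps a singleton to a singleton or to the empty set, so C(w)
   has at most one element: [canon w] computes it, [None] standing for empty. *)
Definition push (c : dsym) (x : seq dsym) : option (seq dsym) :=
  match c, x with
  | S0b, S0 :: a | S1b, S1 :: a => Some a
  | S0b, (S1 | S2) :: _ | S1b, (S0 | S2) :: _ => None
  | _, _ => Some (c :: x)
  end.

Fixpoint canon (w : seq dsym) : option (seq dsym) :=
  if w is c :: w' then obind (push c) (canon w') else Some [::].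

Lemma Ccan_canon w a : Ccan w a <-> canon w = Some a.
Proof.
elim: w a => [|c w IH] a /=; first by split=> [->|[]].
have IHnil : (forall b, Ccan w b <-> b = [::]) <-> canon w = Some [::].
  split=> [/(_ [::]) [_ /(_ erefl)] /IH //|Hw b].
  by rewrite IH Hw; split=> [[]|->].
case: c; rewrite /= ?IHnil; setoid_rewrite IH; case: (canon w) => [x|] /=.
all: try case: x => [|[] x] /=.
all: split; first by firstorder congruence.
all: by move=> // [<-]; firstorder eauto.
Qed.

Lemma Ssimp_push c x s a :
  Ssimp (c :: x ++ s) a <-> exists y, push c x = Some y /\ Ssimp (y ++ s) a.
Proof.
have Esome z : (exists y, Some z = Some y /\ Ssimp (y ++ s) a) <-> Ssimp (z ++ s) a.
  by split=> [[y [[<-]]]|]; last exists z.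
case: c; rewrite /= ?Esome //; case: x => [|[] x]; rewrite /= ?Esome //.
all: split; first by firstorder congruence.
all: by [exists a | case=> y []].
Qed.

Lemma Ssimp_cons_ext c t t' a :
  (forall b, Ssimp t b <-> Ssimp t' b) -> Ssimp (c :: t) a <-> Ssimp (c :: t') a.
Proof. by case: c => Ht /=; setoid_rewrite Ht. Qed.

Lemma Ssimp_cat_canon w s a :
  Ssimp (w ++ s) a <-> exists x, canon w = Some x /\ Ssimp (x ++ s) a.
Proof.
elim: w a => [|c w IH] a /=; first by split=> [|[x [[<-]]]]; first exists [::].
case Ew: (canon w) IH => [x|] /= IH.
  rewrite -Ssimp_push; apply: Ssimp_cons_ext => b.
  by rewrite IH; split=> [[y [[<-]]]|]; last exists x.
split=> [|[x [//]]].
have {}IH b : ~ Ssimp (w ++ s) b by move=> /IH [x []].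
by case: c => /=; firstorder.
Qed.

Lemma canon_split w x : canon w = Some x ->
  exists u p, x = u ++ p /\ all isplain u /\ all isbar p.
Proof.
elim: w x => [|c w IH] x /=; first by case=> <-; exists [::], [::].
case: (canon w) IH => [y|] //= /(_ y erefl) [u [p [-> [Hu Hp]]]].
case: c => /=.
1,2,5: by case=> <-; (eexists (_ :: u), p; split; [reflexivity|split]).
all: case: u Hu => [|[] u] //= Hu.
2,4: by case=> <-; exists u, p.
all: by case: p Hp => [|[] p] //= Hp [<-]; (eexists [::], _; split; [reflexivity|split]).
Qed.

Lemma Ssimp01 s a : all is01 s -> Ssimp s a <-> a = s.
Proof.
elim: s a => [|c s IH] a //=.
case: c => //= /IH Hs; setoid_rewrite Hs.
all: by split=> [[b [-> ->]]|->]; last eexists.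
Qed.

Lemma Ssimp_bar_cat p s a : all isbar p -> all is01 s ->
  Ssimp (p ++ s) a <-> s = revbar p ++ a.
Proof.
rewrite /revbar; elim: p a => [|c p IH] a /= Hp Hs.
  by rewrite Ssimp01 //; split=> ->.
by case: c Hp => //= Hp; rewrite IH // rev_cons -cats1 -catA.
Qed.

Lemma Ssimp_plain_cat u t : all isplain u ->
  (exists a, Ssimp (u ++ t) a) <-> (exists a, Ssimp t a).
Proof.
elim: u => [|c u IH] //= /andP [Hc /IH {}IH].
case: c Hc => //= _; rewrite -IH.
- by split=> [[_ [b [_ Hb]]]|[b Hb]]; [exists b | exists (S0 :: b), b].
- by split=> [[_ [b [_ Hb]]]|[b Hb]]; [exists b | exists (S1 :: b), b].
- by split=> [[_ [_ [b Hb]]]|[b Hb]]; [exists b | exists [::]; split; last exists b].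
Qed.

Lemma Ssimp_cat_nonempty_comp_lang (L sigma : seq dsym -> Prop) :
  (forall s, sigma s -> all is01 s) ->
  (forall s a, sigma s -> (exists c, s = a ++ c) -> sigma a) ->
  (exists a w s, L w /\ sigma s /\ Ssimp (w ++ s) a) <->
  exists v, comp_lang (liftset Ccan L) v /\ sigma v.
Proof.
move=> sigma01 sigma_prefix; split.
- move=> [a [w [s [Lw [sigma_s /Ssimp_cat_canon [x [Ew Hx]]]]]]].
  have [u [p [Ex [Hu Hp]]]] := canon_split Ew; subst x.
  rewrite -catA in Hx.
  have [b Hb] := (Ssimp_plain_cat (p ++ s) Hu).1 (ex_intro _ a Hx).
  have Es := (Ssimp_bar_cat b Hp (sigma01 _ sigma_s)).1 Hb.
  exists (revbar p); split; last by apply: sigma_prefix sigma_s _; exists b.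
  by exists p, u; do !split => //; exists w; rewrite Ccan_canon.
- move=> [_ [[p [u [Hp [Hu [[w [Lw /Ccan_canon Ew]] ->]]]]] sigma_v]].
  have Hnil : Ssimp (p ++ revbar p) [::].
    by apply/(Ssimp_bar_cat _ Hp (sigma01 _ sigma_v)); rewrite cats0.
  have [a Ha] := (Ssimp_plain_cat (p ++ revbar p) Hu).2 (ex_intro _ _ Hnil).
  exists a, w, (revbar p); do !split => //.
  by apply/Ssimp_cat_canon; exists (u ++ p); rewrite -catA.
Qed.

Section Derivations.
Variables (T N : Type) (P : grammar T N).

Lemma gen_nil_inv w : gen P [::] w -> w = [::].
Proof. by move=> H; inversion H. Qed.

Lemma lang_inv A w : lang P A w -> exists rhs, P A rhs /\ gen P rhs w.
Proof.
move=> H; inversion H as [|? ? ? _|? r rhs w1 w2 HA Hw1 Hr]; subst.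
by exists rhs; split=> //; rewrite (gen_nil_inv Hr) cats0.
Qed.

Lemma lang_intro A rhs w : P A rhs -> gen P rhs w -> lang P A w.
Proof. by move=> HA Hw; rewrite -(cats0 w); apply: gen_n HA Hw (gen_nil _). Qed.

Lemma gen_cons_lang A r w1 w2 :
  lang P A w1 -> gen P r w2 -> gen P (inr A :: r) (w1 ++ w2).
Proof. by move=> /lang_inv [rhs [HA Hw1]]; apply: gen_n HA Hw1. Qed.

End Derivations.

Lemma mn_piece_lhs (T N : Type) (Q : N -> Prop) A H (rhs : seq (T + N)) X beta :
  mn_piece Q A H rhs X beta -> X = H \/ Q X.1.
Proof. by elim=> [||? ? B ? ? ? _ QB _ [->|]]; [left|left|right|right]. Qed.

Lemma mn_piece_nonterminals (T N : Type) (Q : N -> Prop) A H (rhs : seq (T + N))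
    X beta :
  mn_piece Q A H rhs X beta ->
  forall Y, List.In (inr Y) beta -> Y.1 = A \/ List.In (inr Y.1) rhs.
Proof.
elim=> {H rhs X beta} [H alpha _|H alpha B rest _ _|H alpha B rest X beta _ _ _ IH] Y.
- move/List.in_app_iff=> [/List.in_map_iff [[t|C] [//= [<-] HC]]|[[<-]|[]]].
    by right.
  by left.
- move/List.in_app_iff=> [/List.in_map_iff [[t|C] [//= [<-] HC]]|[[<-]|[]]].
    by right; apply/List.in_app_iff; left.
  by right; apply/List.in_app_iff; right; left.
- move=> /IH [->|HY]; first by left.
  by right; apply/List.in_app_iff; right; right.
Qed.

Definition rename_sym (T N1 N2 : Type) (f : N1 -> N2) (s : T + N1) : T + N2 :=
  match s with inl t => inl t | inr B => inr (f B) end.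

Definition rename_marked (N1 N2 : Type) (f : N1 -> N2) (X : N1 * bool) : N2 * bool :=
  (f X.1, X.2).

Lemma rename_sym_inr (T N1 N2 : Type) (f : N1 -> N2) (s : T + N1) B2 :
  rename_sym f s = inr B2 -> exists B, s = inr B /\ B2 = f B.
Proof. by case: s => //= B [<-]; exists B. Qed.

Lemma map_rename_liftsym (T N1 N2 : Type) (f : N1 -> N2) (rhs : seq (T + N1)) :
  map (rename_sym (rename_marked f)) (map (@liftsym T N1) rhs) =
  map (@liftsym T N2) (map (rename_sym f) rhs).
Proof. by rewrite -!map_comp; apply: eq_map; case. Qed.

Record region_iso (T N1 N2 : Type) (P1 : grammar T N1) (P2 : grammar T N2)
  (f : N1 -> N2) (g : N2 -> N1) (R1 : N1 -> Prop) (R2 : N2 -> Prop) : Prop :=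
  { iso_fK : forall A, R1 A -> R2 (f A) /\ g (f A) = A;
    iso_gK : forall A, R2 A -> R1 (g A) /\ f (g A) = A;
    iso_prod_f : forall A rhs, R1 A -> P1 A rhs ->
       P2 (f A) (map (rename_sym f) rhs) /\ (forall B, List.In (inr B) rhs -> R1 B);
    iso_prod_g : forall A rhs, R2 A -> P2 A rhs ->
       P1 (g A) (map (rename_sym g) rhs) /\ (forall B, List.In (inr B) rhs -> R2 B) }.

Lemma region_iso_sym T N1 N2 P1 P2 f g R1 R2 :
  @region_iso T N1 N2 P1 P2 f g R1 R2 -> region_iso P2 P1 g f R2 R1.
Proof. by case=> *; split. Qed.

Section IsoDependency.
Variables (T N1 N2 : Type) (P1 : grammar T N1) (P2 : grammar T N2)
  (f : N1 -> N2) (g : N2 -> N1) (R1 : N1 -> Prop) (R2 : N2 -> Prop).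
Hypothesis iso : region_iso P1 P2 f g R1 R2.

Lemma iso_dep_rt A C : R1 A -> clos_refl_trans N1 (dep P1) A C ->
  R1 C /\ clos_refl_trans N2 (dep P2) (f A) (f C).
Proof.
move=> RA H; elim: H RA => {A C} [A C [rhs [HA HC]] RA||A B C _ IH1 _ IH2 RA].
- have [HA2 Rrhs] := iso_prod_f iso RA HA.
  split; first exact: Rrhs.
  apply: rt_step; exists (map (rename_sym f) rhs); split => //.
  by apply/List.in_map_iff; exists (inr C).
- by split => //; apply: rt_refl.
- have [RB H1] := IH1 RA; have [RC H2] := IH2 RB.
  by split => //; apply: rt_trans H1 H2.
Qed.

Lemma iso_sameSCC A C : R1 A -> sameSCC P1 A C -> R1 C /\ sameSCC P2 (f A) (f C).
Proof.
move=> RA [H1 H2]; have [RC H1'] := iso_dep_rt RA H1.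
by have [_ H2'] := iso_dep_rt RC H2.
Qed.

End IsoDependency.

Section IsoLinearity.
Variables (T N1 N2 : Type) (P1 : grammar T N1) (P2 : grammar T N2)
  (f : N1 -> N2) (g : N2 -> N1) (R1 : N1 -> Prop) (R2 : N2 -> Prop).
Hypothesis iso : region_iso P1 P2 f g R1 R2.

Lemma iso_sameSCC_inv A C :
  R1 A -> R1 C -> sameSCC P2 (f A) (f C) -> sameSCC P1 A C.
Proof.
move=> RA RC H.
have [RA2 gA] := iso_fK iso RA; have [RC2 gC] := iso_fK iso RC.
by have [_] := iso_sameSCC (region_iso_sym iso) RA2 H; rewrite gA gC.
Qed.

Lemma iso_Nfree_inv A (alpha : seq (T + N1)) : R1 A ->
  Nfree (sameSCC P2 (f A)) (map (rename_sym f) alpha) -> Nfree (sameSCC P1 A) alpha.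
Proof.
move=> RA Hn B HB HQ; have [_ HQ2] := iso_sameSCC iso RA HQ.
by apply: (Hn (f B)) HQ2; apply/List.in_map_iff; exists (inr B).
Qed.

Lemma iso_Nfree A (alpha : seq (T + N1)) : R1 A ->
  (forall B, List.In (inr B) alpha -> R1 B) ->
  Nfree (sameSCC P1 A) alpha -> Nfree (sameSCC P2 (f A)) (map (rename_sym f) alpha).
Proof.
move=> RA Ralpha Hn B2 /List.in_map_iff [s [Es Hs]] HQ.
have [B [Es' EB]] := rename_sym_inr Es; subst s B2.
exact: Hn B Hs (iso_sameSCC_inv RA (Ralpha B Hs) HQ).
Qed.

Lemma iso_rlin_inv A (rhs : seq (T + N1)) : R1 A ->
  (forall B, List.In (inr B) rhs -> R1 B) ->
  rlin (sameSCC P2 (f A)) (map (rename_sym f) rhs) -> rlin (sameSCC P1 A) rhs.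
Proof.
move=> RA Rrhs [Hn|[alpha2 [B2 [E [HQ Hn]]]]]; first by left; apply: iso_Nfree_inv Hn.
right; case/lastP: rhs Rrhs E => [|rhs x] Rrhs E; first by case: alpha2 E Hn.
move: E; rewrite -cats1 map_cat !cats1 => /rcons_inj [Ea Ex].
have [B [Ex' EB]] := rename_sym_inr Ex; subst x B2.
have RB : R1 B by apply: Rrhs; rewrite -cats1; apply/List.in_app_iff; right; left.
exists rhs, B; rewrite cats1; split=> //; split; first exact: iso_sameSCC_inv HQ.
by apply: iso_Nfree_inv RA _; rewrite Ea.
Qed.

Lemma iso_llin_inv A (rhs : seq (T + N1)) : R1 A ->
  (forall B, List.In (inr B) rhs -> R1 B) ->
  llin (sameSCC P2 (f A)) (map (rename_sym f) rhs) -> llin (sameSCC P1 A) rhs.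
Proof.
move=> RA Rrhs [Hn|[alpha2 [B2 [E [HQ Hn]]]]]; first by left; apply: iso_Nfree_inv Hn.
right; case: rhs Rrhs E => [|x rhs] Rrhs //= [Ex Ea].
have [B [Ex' EB]] := rename_sym_inr Ex; subst x B2; have RB : R1 B by apply: Rrhs; left.
exists rhs, B; split=> //; split; first exact: iso_sameSCC_inv HQ.
by apply: iso_Nfree_inv RA _; rewrite Ea.
Qed.

Lemma iso_transformed A : R1 A -> transformed P1 A -> transformed P2 (f A).
Proof.
move=> RA [Nr Nl]; split=> [Hr2|Hl2]; [apply: Nr|apply: Nl] => C rhs HAC HC;
  have [RC HAC2] := iso_sameSCC iso RA HAC; have [HC2 Rrhs] := iso_prod_f iso RC HC.
- exact: iso_rlin_inv (Hr2 _ _ HAC2 HC2).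
- exact: iso_llin_inv (Hl2 _ _ HAC2 HC2).
Qed.

End IsoLinearity.

Section IsoMN.
Variables (T N1 N2 : Type) (P1 : grammar T N1) (P2 : grammar T N2)
  (f : N1 -> N2) (g : N2 -> N1) (R1 : N1 -> Prop) (R2 : N2 -> Prop).
Hypothesis iso : region_iso P1 P2 f g R1 R2.

Lemma iso_transformed_inv A : R1 A -> transformed P2 (f A) -> transformed P1 A.
Proof.
move=> RA H; have [RA2 gA] := iso_fK iso RA.
by have := iso_transformed (region_iso_sym iso) RA2 H; rewrite gA.
Qed.

Lemma iso_mn_piece A H (rhs : seq (T + N1)) X beta : R1 A ->
  (forall B, List.In (inr B) rhs -> R1 B) ->
  mn_piece (sameSCC P1 A) A H rhs X beta ->
  mn_piece (sameSCC P2 (f A)) (f A) (rename_marked f H) (map (rename_sym f) rhs)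
           (rename_marked f X) (map (rename_sym (rename_marked f)) beta).
Proof.
move=> RA Rrhs Hp; elim: Hp Rrhs => {H rhs X beta}
  [H alpha Hn|H alpha B rest Hn QB|H alpha B rest X beta Hn QB _ IH] Rrhs.
- by rewrite map_cat map_rename_liftsym; apply/mnp_end/(iso_Nfree iso).
- have Ralpha C : List.In (inr C) alpha -> R1 C.
    by move=> HC; apply: Rrhs; apply/List.in_app_iff; left.
  rewrite !map_cat /= map_rename_liftsym; apply: mnp_here.
    exact: (iso_Nfree iso).
  by have [_] := iso_sameSCC iso RA QB.
- have Ralpha C : List.In (inr C) alpha -> R1 C.
    by move=> HC; apply: Rrhs; apply/List.in_app_iff; left.
  rewrite map_cat /=; apply: mnp_later.
  + exact: (iso_Nfree iso).
  + by have [_] := iso_sameSCC iso RA QB.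
  + by apply: IH => C HC; apply: Rrhs; apply/List.in_app_iff; right; right.
Qed.

Lemma iso_MN X beta : R1 X.1 -> MN P1 X beta ->
  MN P2 (rename_marked f X) (map (rename_sym (rename_marked f)) beta) /\
  (forall Y, List.In (inr Y) beta -> R1 Y.1).
Proof.
move=> RX [[NX [EX [rhs [HX ->]]]]|[[A [rhs [TA [HA Hp]]]]|[TX [EX ->]]]].
- have [HX2 Rrhs] := iso_prod_f iso RX HX; split.
  + left; split; first by move/(iso_transformed_inv RX).
    by split=> //; exists (map (rename_sym f) rhs); rewrite map_rename_liftsym.
  + by move=> Y /List.in_map_iff [[t|B] [//= [<-] HB]]; apply: Rrhs.
- have RA : R1 A.
    case: (mn_piece_lhs Hp) => [EX|[_ HXA]]; first by rewrite EX in RX.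
    by have [] := iso_dep_rt iso RX HXA.
  have [HA2 Rrhs] := iso_prod_f iso RA HA; split.
  + right; left; exists (f A), (map (rename_sym f) rhs).
    split; first exact: (iso_transformed iso RA TA).
    by split=> //; apply: (iso_mn_piece RA Rrhs Hp).
  + by move=> Y /(mn_piece_nonterminals Hp) [-> //|]; apply: Rrhs.
- split=> //; right; right; split; last by split.
  exact: (iso_transformed iso RX TX).
Qed.

Lemma iso_gen beta w : (forall Y, List.In (inr Y) beta -> R1 Y.1) ->
  gen (MN P1) beta w -> gen (MN P2) (map (rename_sym (rename_marked f)) beta) w.
Proof.
move=> Rbeta Hg; elim: Hg Rbeta => {beta w}
  [|t r w _ IH|A r rhs w1 w2 HA _ IH1 _ IH2] Rbeta /=.
- exact: gen_nil.
- by apply: gen_t; apply: IH => Y HY; apply: Rbeta; right.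
- have [HA2 Rrhs] := iso_MN (Rbeta A (or_introl erefl)) HA.
  by apply: gen_n HA2 (IH1 Rrhs) (IH2 _) => Y HY; apply: Rbeta; right.
Qed.

End IsoMN.

Lemma iso_lang T N1 N2 P1 P2 f g R1 R2 (iso : @region_iso T N1 N2 P1 P2 f g R1 R2)
  A b w : R1 A -> lang (MN P1) (A, b) w <-> lang (MN P2) (f A, b) w.
Proof.
move=> RA; have [RA2 gA] := iso_fK iso RA; split.
- by apply: (iso_gen iso (beta := [:: inr (A, b)])) => Y [[<-]|[]].
- move/(iso_gen (region_iso_sym iso)); rewrite /= /rename_marked /= gA.
  by apply=> Y [[<-]|[]].
Qed.

Definition rename_crit (C1 C2 : Type) (k : C1 -> C2) (X : dnt C1) : dnt C2 :=
  match X with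
  | NRel l => NRel l | ND l => ND l | NL f i => NL f i | NSig f => NSig f
  | NCrit c => NCrit (k c)
  end.

Definition rename_prod (C1 C2 : Type) (k : C1 -> C2)
  (x : dnt C1 * seq (dsym + dnt C1)) : dnt C2 * seq (dsym + dnt C2) :=
  (rename_crit k x.1, map (rename_sym (rename_crit k)) x.2).

Definition core_prods (CN : Type) (p : program) (cs : CN) :
    seq (dnt CN * seq (dsym + dnt CN)) :=
  rel_prods CN (p_main p)
  ++ [seq (ND l, [:: inr (NRel l); inr (NSig None)]) | l <- labels (p_main p)]
  ++ [:: (NSig None, [:: inr (NCrit cs)])]
  ++ flatten (map (fun_prods CN p) (p_defs p)).

Section RenameCrit.
Variables (C1 C2 : Type) (k : C1 -> C2).

Lemma map_rename_app_prods pis s :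
  map (rename_prod k) (app_prods C1 pis s) = app_prods C2 pis s.
Proof. by case: s => //= f ys; rewrite -map_comp; apply: eq_map; case. Qed.

Lemma map_rename_rel_prods e :
  map (rename_prod k) (rel_prods C1 e) = rel_prods C2 e.
Proof.
elim: e => [pi o e1 IH1 e2 IH2|pi x pis s e IH|pi o] //=.
- by rewrite map_cat IH1 IH2.
- by rewrite !map_cat IH map_rename_app_prods -map_comp.
Qed.

Lemma map_rename_fun_prods p d :
  map (rename_prod k) (fun_prods C1 p d) = fun_prods C2 p d.
Proof.
rewrite /fun_prods !map_cat map_rename_rel_prods map_flatten -!map_comp.
congr (_ ++ flatten _ ++ _ ++ _); apply: eq_map => iz /=; by rewrite -map_comp.
Qed.

Lemma map_rename_core_prods p (cs : C1) :
  map (rename_prod k) (core_prods p cs) = core_prods p (k cs).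
Proof.
rewrite /core_prods !map_cat map_rename_rel_prods -!map_comp map_flatten -map_comp.
congr (_ ++ _ ++ _ ++ flatten _); apply: eq_map => d /=.
exact: map_rename_fun_prods.
Qed.

Lemma demand_grammar_rename p (cps1 : seq (C1 * seq (dsym + C1))) (cs1 : C1)
    (cps2 : seq (C2 * seq (dsym + C2))) X rhs :
  (forall c, X <> NCrit c) -> demand_grammar p cps1 cs1 X rhs ->
  demand_grammar p cps2 (k cs1) (rename_crit k X) (map (rename_sym (rename_crit k)) rhs).
Proof.
move=> NX [H|[c [r' [EX _]]]]; last by case: (NX c).
left; rewrite -[List.In _ _]/(List.In _ (core_prods p (k cs1))) -map_rename_core_prods.
by apply/List.in_map_iff; exists (X, rhs).
Qed.

End RenameCrit.

Definition symbolic (CN : Type) (X : dnt CN) : bool :=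
  match X with NRel _ | NL _ _ => true | _ => false end.

Definition prod_shape (CN : Type) (cs : CN) (X : dnt CN) (r : seq (dsym + dnt CN)) :=
  match X with
  | NRel _ | NL _ _ => forall B, List.In (inr B) r -> symbolic B
  | ND c => exists g, r = [:: inr (NRel c); inr (NSig g)]
  | NSig f => (exists c, r = [:: inr (ND c)]) \/ (f = None /\ r = [:: inr (NCrit cs)])
  | NCrit _ => False
  end.

Ltac destruct_In := repeat match goal with
  | H : List.In _ (_ ++ _) |- _ => apply List.in_app_iff in H; destruct H
  | H : List.In _ (map _ _) |- _ => apply List.in_map_iff in H; destruct H as [? [? ?]]
  | H : List.In _ (flatten _) |- _ => apply List.in_concat in H; destruct H as [? [? ?]]
  | H : List.In _ (_ :: _) |- _ => destruct H
  | H : List.In _ [::] |- _ => destruct H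
  | H : _ \/ _ |- _ => destruct H
  | H : False |- _ => destruct H
  | H : (_, _) = (_, _) |- _ => injection H; clear H; intros; subst
  | H : _ = (_, _) |- _ => progress simpl in H
  | H : inr _ = inr _ |- _ => injection H; clear H; intros; subst
  | H : ?x = _ |- _ => is_var x; subst x
  | H : _ = ?x |- _ => is_var x; subst x
  end.

Lemma app_prods_symbolic (CN : Type) pis s (X : dnt CN) r :
  List.In (X, r) (app_prods CN pis s) ->
  symbolic X /\ forall B, List.In (inr B) r -> symbolic B.
Proof.
by case: s => [||a b|a|a|a|a b|f ys] /= H; destruct_In; split=> // ? ?; destruct_In.
Qed.

Lemma rel_prods_symbolic (CN : Type) e (X : dnt CN) r :
  List.In (X, r) (rel_prods CN e) ->
  symbolic X /\ forall B, List.In (inr B) r -> symbolic B.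
Proof.
elim: e X r => [pi o e1 IH1 e2 IH2|pi x pis s e IH|pi o] X r /= H; destruct_In;
  try (by apply: IH1); try (by apply: IH2); try (by apply: IH);
  try (by apply: app_prods_symbolic; eassumption);
  by split=> // ? ?; destruct_In.
Qed.

Lemma symbolic_prod_shape (CN : Type) (cs : CN) (X : dnt CN) r :
  symbolic X -> (forall B, List.In (inr B) r -> symbolic B) -> prod_shape cs X r.
Proof. by case: X. Qed.

Lemma fun_prods_shape (CN : Type) (cs : CN) p d (X : dnt CN) r :
  List.In (X, r) (fun_prods CN p d) -> prod_shape cs X r.
Proof.
rewrite /fun_prods => H; destruct_In.
- by case: (rel_prods_symbolic H); apply: symbolic_prod_shape.
- by move=> ? ?; destruct_In.
- by eexists.
- by left; eexists.
Qed.

Lemma core_prods_shape (CN : Type) p (cs : CN) (X : dnt CN) r :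
  List.In (X, r) (core_prods p cs) -> prod_shape cs X r.
Proof.
rewrite /core_prods => H; destruct_In.
- by case: (rel_prods_symbolic H); apply: symbolic_prod_shape.
- by eexists.
- by right.
- by apply: fun_prods_shape; eassumption.
Qed.

Definition right_linear01 (CN : Type) (cps : seq (CN * seq (dsym + CN))) : Prop :=
  forall A r, List.In (A, r) cps ->
    exists w ob, r = map inl w ++ ob /\ all is01 w /\
                 (ob = [::] \/ exists B, ob = [:: inr B]).

Lemma rlin_snoc (T N : Type) (Q : N -> Prop) (alpha : seq (T + N)) B :
  Nfree Q alpha -> rlin Q (alpha ++ [:: inr B]).
Proof.
move=> Hn; case: (classic (Q B)) => QB; first by right; exists alpha, B.
by left=> C /List.in_app_iff [/Hn //|[[<-]|[]]].
Qed.

Lemma Nfree_terminals (T N : Type) (Q : N -> Prop) (w : seq T) : Nfree Q (map inl w).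
Proof. by move=> B /List.in_map_iff [t []]. Qed.

Section DemandGrammar.
Variables (p : program) (CN : Type) (cps : seq (CN * seq (dsym + CN))) (cs : CN).
Hypothesis crit_rl : right_linear01 cps.
Local Notation G := (demand_grammar p cps cs).

Lemma demand_grammar_shape X r : G X r ->
  match X with
  | NCrit c => exists r', List.In (c, r') cps /\ r = map (@lift_crit CN) r'
  | _ => prod_shape cs X r
  end.
Proof.
case=> [H|[c [r' [-> [H1 H2]]]]]; last by exists r'.
by have := core_prods_shape H; case: X H.
Qed.

Lemma symbolic_closed A B rhs :
  symbolic A -> G A rhs -> List.In (inr B) rhs -> symbolic B.
Proof. by move=> SA /demand_grammar_shape; case: A SA => //= *; auto. Qed.

Lemma symbolic_dep_rt A B :
  symbolic A -> clos_refl_trans _ (dep G) A B -> symbolic B.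
Proof.
move=> SA H; elim: H SA => {A B} // [A B [rhs [HA HB]] SA|A B C _ IH1 _ IH2 /IH1 /IH2 //].
exact: symbolic_closed HA HB.
Qed.

Lemma nonsymbolic_not_transformed X : ~~ symbolic X -> ~ transformed G X.
Proof.
move=> NX [Nr _]; apply: Nr => C rhs [_ HCX] HC.
have NC : ~~ symbolic C.
  by apply: contra NX => SC; apply: symbolic_dep_rt SC HCX.
have NQ B : symbolic B -> ~ sameSCC G X B.
  by move=> SB [_ HBX]; move/negP: NX; apply; apply: symbolic_dep_rt SB HBX.
move/demand_grammar_shape: HC; case: C NC {HCX} => //= [l _ [g ->]|f _ [[c ->]|[_ ->]]|c _].
- by apply: (@rlin_snoc _ _ _ [:: inr (NRel l)]) => B [[<-]|[]]; apply: NQ.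
- exact: (@rlin_snoc _ _ _ [::]).
- exact: (@rlin_snoc _ _ _ [::]).
- move=> [r' [/crit_rl [w [ob [-> [_ Hob]]]] ->]].
  have Ew : map (@lift_crit CN) (map inl w) = map inl w by elim: w => //= t w ->.
  rewrite map_cat Ew; case: Hob => [->|[B ->]] /=.
    by rewrite cats0; left; apply: Nfree_terminals.
  exact/rlin_snoc/Nfree_terminals.
Qed.

Lemma MN_nonsymbolic X b beta : ~~ symbolic X -> MN G (X, b) beta ->
  b = false /\ exists rhs, G X rhs /\ beta = map (@liftsym _ _) rhs.
Proof.
move=> NX [[_ [Hb H]]|[[A [rhs [TA [_ Hp]]]]|[TX _]]] //; exfalso.
- case: (mn_piece_lhs Hp) => [[EX _]|[HAX _]].
    by subst; apply: (nonsymbolic_not_transformed NX).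
  apply: (@nonsymbolic_not_transformed A) TA.
  by apply: contra NX => SA; apply: symbolic_dep_rt SA HAX.
- exact: (nonsymbolic_not_transformed NX).
Qed.

Lemma MN_nonsymbolic_intro X rhs : ~~ symbolic X -> G X rhs ->
  MN G (X, false) (map (@liftsym _ _) rhs).
Proof.
move=> NX HX; left; split; first exact: nonsymbolic_not_transformed.
by split=> //; exists rhs.
Qed.

Definition lift_crit_marked (s : dsym + CN) : dsym + (dnt CN * bool) :=
  liftsym (lift_crit s).

Lemma MN_crit_gen_inv r w : gen (MN G) (map lift_crit_marked r) w ->
  gen (crit_grammar cps) r w.
Proof.
move Eb: (map _ r) => beta Hg.
elim: Hg r Eb => {beta w} [|t beta w _ IH|A beta rhs w1 w2 HA _ IH1 _ IH2] [|[t'|c] r] //=.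
- by move=> _; apply: gen_nil.
- by case=> <- Er; apply/gen_t/IH.
- case=> EA Er; subst A.
  have [_ [rhs0 [HG Erhs]]] := MN_nonsymbolic (X := NCrit c) isT HA.
  have [r' [Hin Erhs0]] := demand_grammar_shape HG; subst rhs rhs0.
  by apply: gen_n Hin (IH1 _ _) (IH2 _ Er); rewrite -map_comp.
Qed.

Lemma crit_gen_MN r w : gen (crit_grammar cps) r w ->
  gen (MN G) (map lift_crit_marked r) w.
Proof.
elim=> {r w} [|t r w _ IH|A r rhs w1 w2 HA _ IH1 _ IH2] /=.
- exact: gen_nil.
- exact: gen_t.
- apply: gen_n IH2; last exact: IH1.
  rewrite /lift_crit_marked map_comp; apply: MN_nonsymbolic_intro => //.
  by right; exists A, rhs.
Qed.

Lemma MN_crit_lang c w : lang (MN G) (NCrit c, false) w <-> crit_lang cps c w.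
Proof.
split=> [|/crit_gen_MN //].
exact: (MN_crit_gen_inv (r := [:: inr c])).
Qed.

End DemandGrammar.

Lemma crit_lang01 (CN : Type) (cps : seq (CN * seq (dsym + CN))) r w :
  right_linear01 cps -> gen (crit_grammar cps) r w ->
  (forall t, List.In (inl t) r -> is01 t) -> all is01 w.
Proof.
move=> crit_rl; elim=> {r w} [|t r w _ IH|A r rhs w1 w2 HA _ IH1 _ IH2] //= Hr.
- by rewrite Hr /=; [apply: IH => t' Ht'; apply: Hr; right | left].
- rewrite all_cat IH1 ?IH2 // => [t Ht|t]; first by apply: Hr; right.
  have [w0 [ob [-> [Hw0 Hob]]]] := crit_rl _ _ HA.
  case/List.in_app_iff=> [/List.in_map_iff [t' [[<-] Ht']]|].
    exact: (List.forallb_forall _ _).1 Hw0 _ Ht'.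
  by case: Hob => [->|[B ->]] [].
Qed.

Lemma eps_right_linear01 : right_linear01 eps_cps.
Proof. by move=> A r [[_ <-]|[]]; exists [::], [::]; do !split=> //; left. Qed.

Lemma eps_crit_lang w : crit_lang eps_cps tt w <-> w = [::].
Proof.
split=> [H|->]; first by have [_ [[[<-]|[]] /gen_nil_inv]] := lang_inv H.
by apply: (lang_intro (rhs := [::])); [left | exact: gen_nil].
Qed.

Lemma demand_grammar_iso p (C1 C2 : Type) (k : C1 -> C2) (k' : C2 -> C1)
    (cps1 : seq (C1 * seq (dsym + C1))) (cs1 : C1)
    (cps2 : seq (C2 * seq (dsym + C2))) (cs2 : C2) :
  k cs1 = cs2 -> k' cs2 = cs1 ->
  region_iso (demand_grammar p cps1 cs1) (demand_grammar p cps2 cs2)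
    (rename_crit k) (rename_crit k') (fun X => symbolic X) (fun X => symbolic X).
Proof.
move=> E1 E2; split; try by case.
- move=> A rhs SA HA; split.
    by rewrite -E1; apply: demand_grammar_rename HA; case: A SA.
  by move=> B; apply: symbolic_closed HA.
- move=> A rhs SA HA; split.
    by rewrite -E2; apply: demand_grammar_rename HA; case: A SA.
  by move=> B; apply: symbolic_closed HA.
Qed.

Definition spine_nt (CN : Type) (X : dnt CN) : bool :=
  match X with ND _ | NSig _ => true | _ => false end.

Lemma MN_transfer p (C1 C2 : Type) (k : C1 -> C2) (cps1 : seq (C1 * seq (dsym + C1)))
    (cs1 : C1) (cps2 : seq (C2 * seq (dsym + C2))) X rhs :
  right_linear01 cps2 -> demand_grammar p cps1 cs1 X rhs -> spine_nt X ->
  MN (demand_grammar p cps2 (k cs1)) (rename_crit k X, false)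
     (map (@liftsym _ _) (map (rename_sym (rename_crit k)) rhs)).
Proof.
move=> crit_rl HX SX; apply: MN_nonsymbolic_intro => //; first by case: X SX {HX}.
by apply: demand_grammar_rename HX; case: X SX.
Qed.

(* The sentential forms leading from D_pi to the criterion: D_c -> X_c sigma_g
   and sigma_g -> D_c' | criterion; none of these nonterminals is transformed. *)
Inductive spine := SpSig of option fname | SpD of label | SpRelSig of label & option fname.

Definition spine_form (CN : Type) (u : spine) : seq (dsym + dnt CN * bool) :=
  match u with
  | SpSig f => [:: inr (NSig f, false)]
  | SpD c => [:: inr (ND c, false)]
  | SpRelSig c g => [:: inr (NRel c, false); inr (NSig g, false)]
  end.

Section Factorization.
Variables (p : program) (CN : Type) (cps : seq (CN * seq (dsym + CN))) (cs : CN).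
Hypothesis crit_rl : right_linear01 cps.
Local Notation G := (demand_grammar p cps cs).
Local Notation Geps := (demand_grammar p eps_cps tt).

Lemma MN_symbolic_eps c w :
  lang (MN G) (NRel c, false) w <-> lang (MN Geps) (NRel c, false) w.
Proof.
exact: (iso_lang (demand_grammar_iso p (k := fun _ => tt) (k' := fun _ => cs)
                    cps eps_cps erefl erefl) (A := NRel c)).
Qed.

Lemma MN_eps_crit_nil : gen (MN Geps) [:: inr (NCrit tt, false)] [::].
Proof. by apply/(MN_crit_lang p tt eps_right_linear01)/eps_crit_lang. Qed.

Lemma spine_split u x : gen (MN G) (spine_form CN u) x ->
  exists w s, x = w ++ s /\ gen (MN Geps) (spine_form unit u) w /\ crit_lang cps cs s.
Proof.
move Eb: (spine_form CN u) => beta Hg.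
elim: Hg u Eb => {beta x} [|t r w _ _|A r rhs w1 w2 HA Hw1 IH1 Hw2 IH2] [f|c|c g] //=.
- case=> EA Er; subst A r; rewrite (gen_nil_inv Hw2) cats0.
  have [_ [rhs0 [HG Erhs]]] := MN_nonsymbolic (X := NSig f) crit_rl isT HA; subst rhs.
  case: (demand_grammar_shape HG) => [[c Erhs0]|[Ef Erhs0]]; subst rhs0.
    have [w [s [-> [Hw Hs]]]] := IH1 (SpD c) erefl.
    exists w, s; split=> //; split=> //; apply: lang_intro Hw.
    exact: (MN_transfer (fun _ => tt) eps_right_linear01 HG isT).
  subst f; exists [::], w1; split=> //; split; last exact/(MN_crit_lang p cs crit_rl).
  apply: lang_intro MN_eps_crit_nil.
  exact: (MN_transfer (fun _ => tt) eps_right_linear01 HG isT).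
- case=> EA Er; subst A r; rewrite (gen_nil_inv Hw2) cats0.
  have [_ [rhs0 [HG Erhs]]] := MN_nonsymbolic (X := ND c) crit_rl isT HA; subst rhs.
  have [g Erhs0] := demand_grammar_shape HG; subst rhs0.
  have [w [s [-> [Hw Hs]]]] := IH1 (SpRelSig c g) erefl.
  exists w, s; split=> //; split=> //; apply: lang_intro Hw.
  exact: (MN_transfer (fun _ => tt) eps_right_linear01 HG isT).
- case=> EA Er; subst A r.
  have [w [s [-> [Hw Hs]]]] := IH2 (SpSig g) erefl.
  exists (w1 ++ w), s; rewrite catA; split=> //; split=> //.
  apply: gen_cons_lang Hw; apply/(MN_symbolic_eps c w1).1.
  exact: lang_intro HA Hw1.
Qed.

Lemma spine_join u w s : gen (MN Geps) (spine_form unit u) w -> crit_lang cps cs s ->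
  gen (MN G) (spine_form CN u) (w ++ s).
Proof.
move Eb: (spine_form unit u) => beta Hg.
elim: Hg u Eb => {beta w} [|t r w _ _|A r rhs w1 w2 HA Hw1 IH1 Hw2 IH2] [f|c|c g] //=.
- case=> EA Er; subst A r; rewrite (gen_nil_inv Hw2) cats0 => Hs.
  have [_ [rhs0 [HG Erhs]]] :=
    MN_nonsymbolic (X := NSig f) eps_right_linear01 isT HA; subst rhs.
  case: (demand_grammar_shape HG) => [[c Erhs0]|[Ef Erhs0]]; subst rhs0.
    apply: lang_intro (IH1 (SpD c) erefl Hs).
    exact: (MN_transfer (fun _ => cs) crit_rl HG isT).
  subst f; move/(MN_crit_lang p tt eps_right_linear01)/eps_crit_lang: Hw1 => ->.
  apply: lang_intro (MN_transfer (fun _ => cs) crit_rl HG isT) _.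
  exact/(MN_crit_lang p cs crit_rl).
- case=> EA Er; subst A r; rewrite (gen_nil_inv Hw2) cats0 => Hs.
  have [_ [rhs0 [HG Erhs]]] :=
    MN_nonsymbolic (X := ND c) eps_right_linear01 isT HA; subst rhs.
  have [g Erhs0] := demand_grammar_shape HG; subst rhs0.
  apply: lang_intro (IH1 (SpRelSig c g) erefl Hs).
  exact: (MN_transfer (fun _ => cs) crit_rl HG isT).
- case=> EA Er; subst A r => Hs.
  rewrite -catA; apply: gen_cons_lang (IH2 (SpSig g) erefl Hs).
  by apply/(MN_symbolic_eps c w1).2; apply: lang_intro HA Hw1.
Qed.

Lemma M_lang_factor pi x : M_lang p cps cs pi x <->
  exists w s, x = w ++ s /\ M_lang p eps_cps tt pi w /\ crit_lang cps cs s.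
Proof.
split=> [|[w [s [-> [Hw Hs]]]]]; first exact: (@spine_split (SpD pi)).
exact: (@spine_join (SpD pi)).
Qed.

End Factorization.

Theorem mainTheorem4 (p : program) (Hwf : wf_program p)
  (CN : Type) (cps : seq (CN * seq (dsym + CN))) (cs : CN)
  (Hcrit : slicing_criterion cps cs)
  (pi : label) (Hpi : pi \in expr_labels p) :
  (exists a, liftset Ssimp (M_lang p cps cs pi) a) <->
  inSlice p pi (crit_lang cps cs).
Proof.
have [crit_rl crit_prefix] := Hcrit.
have crit01 s : crit_lang cps cs s -> all is01 s.
  by move/crit_lang01; apply=> // t [|[]].
rewrite /inSlice /Acomp_lang -(Ssimp_cat_nonempty_comp_lang _ crit01 crit_prefix).
split=> [[a [x [/(M_lang_factor _ _ crit_rl) [w [s [-> [Hw Hs]]]] Ha]]]|].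
  by exists a, w, s.
move=> [a [w [s [Hw [Hs Ha]]]]]; exists a, (w ++ s); split=> //.
by apply/(M_lang_factor _ _ crit_rl); exists w, s.
Qed.
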